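(* For integers $n\ge k\ge 0$ define the Salié coefficients $s(n,k)$ by $$\sum_{n,k\ge 0}\frac{x^{2n}}{(2n)!}\,s(n,k)\,y^{k}=\frac{\cosh\!\left(\tfrac12 x\sqrt{1+4y}\right)}{\cosh\!\left(\tfrac12 x\right)},$$ and set $\epsilon(n,k)=|s(n,k)|/4^{k}$. Then for all $n>1$ and $1\le k\le n-1$, $$\epsilon(n,k)>2\,\epsilon(n,k+1)\quad\text{and}\quad \epsilon(n,k)>\sum_{l=k+1}^{n}\epsilon(n,l).$$ *)

From mathcomp Require Import all_boot all_order all_algebra.
Set Implicit Arguments. Unset Strict Implicit. Unset Printing Implicit Defensive.
Import Order.TTheory GRing.Theory Num.Theory.
Local Open Scope ring_scope.

(* Salie coefficients s(n,k) are characterized by the generating-function identity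
     sum_{n,k} x^(2n)/(2n)! s(n,k) y^k = cosh(x/2 sqrt(1+4y)) / cosh(x/2)
   as formal power series.  Multiplying by cosh(x/2) = sum_n x^(2n)/(2n)! 4^(-n)
   and using cosh(x/2 sqrt(1+4y)) = sum_n x^(2n)/(2n)! 4^(-n) (1+4y)^n,
   comparing the coefficients of x^(2n)/(2n)! y^k gives exactly: *)
Definition salie_gf (s : nat -> nat -> rat) : Prop :=
  forall n k : nat,
    \sum_(m < n.+1) ('C(n.*2, m.*2))%:R * (4 ^+ (n - m))^-1 * s m k
    = ('C(n, k))%:R * 4 ^+ k / 4 ^+ n.

Definition salie_eps (s : nat -> nat -> rat) (n k : nat) : rat :=
  `|s n k| / 4 ^+ k.

From mathcomp Require Import all_boot all_order all_algebra.
From mathcomp Require Import ring lra zify.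
Import Order.TTheory GRing.Theory Num.Theory.
Local Open Scope ring_scope.

(* After the rescaling a(n,k) = 4^(n-k) s(n,k), the generating function says
   that the transform f |-> (n |-> sum_m C(2n,2m) f(m)) maps a(.,k) to C(.,k).
   This transform is unitriangular, hence injective, and it commutes (up to a
   shift) with multiplication by 2m(2m-1); together with a binomial identity
   this yields, for b(n,k) = (-1)^(n+k) a(n,k) = 4^n eps(n,k),
     (2k+2)(2k+1) b(n+1,k+1) = (2n+2)(2n+1) b(n,k) + 4(k+1)(k+2) b(n+1,k+2).
   All coefficients are positive, so a downward induction on k gives b >= 0
   and b(n,k) > 0 for 1 <= k <= n.  An induction on n then shows
   2 b(n,k+1) <= b(n,k) for k >= 1, strictly when b(n,k+1) > 0, and such
   geometric decay bounds the tail sum by 2 b(n,k+1) < b(n,k). *)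

Lemma downward_ind (N : nat) (P : nat -> Prop) :
  (forall k, (N <= k)%N -> P k) -> (forall k, P k.+1 -> P k) -> forall k, P k.
Proof.
move=> base step k; have [d] := ubnP (N - k); elim: d k => // d IH k lt_d.
have [/base // | lt_kN] := leqP N k.
by apply/step/IH; lia.
Qed.

Lemma mul_binSS n m : ('C(n.+2, m.+2) * (m.+2 * m.+1) = n.+2 * n.+1 * 'C(n, m))%N.
Proof.
have := mul_bin_diag n.+2 m.+1; have := mul_bin_diag n.+1 m => /= h1 h2.
by rewrite mulnA (mulnC _ m.+2) -h2 -mulnA (mulnC _ m.+1) -h1 mulnA.
Qed.

Lemma bin_double_rec N k :
  (k.*2.+2 * k.*2.+1 * 'C(N, k.+1) + 4 * k.+1 * k.+2 * 'C(N, k.+2)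
   = N.*2 * (N.*2).-1 * 'C(N.-1, k))%N.
Proof.
case: N => [|N]; first by rewrite !bin0n; lia.
have [le_kN | lt_Nk] := leqP k N; last by rewrite !bin_small //; lia.
have := mul_bin_diag N.+1 k; have := mul_bin_left N.+1 k.+1 => /=.
rewrite -!muln2; nia.
Qed.

Lemma sum_halving_le (R : realDomainType) (u : nat -> R) m N :
  (forall l, (m <= l)%N -> 2 * u l.+1 <= u l) -> (m <= N)%N ->
  \sum_(m <= l < N) u l + 2 * u N <= 2 * u m.
Proof.
move=> halving; elim: N => [|N IH].
  by rewrite leqn0 => /eqP ->; rewrite big_geq ?add0r.
rewrite leq_eqVlt => /orP[/eqP <- | le_mN]; first by rewrite big_geq ?add0r.
have := IH le_mN; have := halving N le_mN.
by rewrite big_nat_recr //=; lra.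
Qed.

Section EvenBinomialTransform.
Context {R : comPzRingType}.
Implicit Types f g : nat -> R.

Definition even_binomial_transform f n : R :=
  \sum_(m < n.+1) 'C(n.*2, m.*2)%:R * f m.

Local Notation T := even_binomial_transform.

Lemma even_binomial_transform_recr f n :
  T f n = \sum_(m < n) 'C(n.*2, m.*2)%:R * f m + f n.
Proof. by rewrite /T big_ord_recr /= binn mul1r. Qed.

Lemma even_binomial_transform_inj f g N :
  (forall n, (n < N)%N -> T f n = T g n) -> forall n, (n < N)%N -> f n = g n.
Proof.
move=> eqT n; elim/ltn_ind: n => n IH lt_nN.
have := eqT n lt_nN; rewrite !even_binomial_transform_recr.
rewrite (eq_bigr (fun m : 'I_n => 'C(n.*2, m.*2)%:R * g m)) => [/addrI // | m _].
by rewrite IH // (ltn_trans _ lt_nN).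
Qed.

Lemma even_binomial_transformD (a c : R) f g n :
  T (fun m => a * f m + c * g m) n = a * T f n + c * T g n.
Proof.
rewrite /T !mulr_sumr -big_split; apply: eq_bigr => m _.
by rewrite mulrDr !(mulrCA _%:R).
Qed.

Lemma even_binomial_transform_shift f n :
  T (fun m => (m.*2 * (m.*2).-1)%:R * f m.-1) n
  = (n.*2 * (n.*2).-1)%:R * T f n.-1.
Proof.
case: n => [|n]; first by rewrite /T !big_ord1 /= double0 !mul0r mulr0.
rewrite /T big_ord_recl /= mul0r mulr0 add0r mulr_sumr; apply: eq_bigr => m _.
by rewrite /bump /= add1n !doubleS /= !mulrA -!natrM mul_binSS.
Qed.

End EvenBinomialTransform.

Section PositiveTriangle.
Context {R : realFieldType} {b : nat -> nat -> R}.
Hypothesis b_eq0 : forall n k, (n < k)%N -> b n k = 0.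
Hypothesis b_diag : forall n, b n n = 1.
Hypothesis b_col0_ge0 : forall n, 0 <= b n 0.
Hypothesis b_rec : forall n k,
  (k.*2.+2 * k.*2.+1)%:R * b n.+1 k.+1
  = (n.*2.+2 * n.*2.+1)%:R * b n k + (4 * k.+1 * k.+2)%:R * b n.+1 k.+2.

Lemma triangle_ge0 n k : 0 <= b n k.
Proof.
elim: n k => [|n IH] [|k]; rewrite ?b_col0_ge0 //; first by rewrite b_eq0.
elim/(downward_ind n.+1): k => [k le_nk | k IHk]; first by rewrite b_eq0.
have A_gt0 : 0 < (k.*2.+2 * k.*2.+1)%:R :> R by rewrite ltr0n.
by rewrite -(pmulr_rge0 _ A_gt0) b_rec addr_ge0 ?mulr_ge0.
Qed.

Lemma triangle_gt0 n k : (0 < k <= n)%N -> 0 < b n k.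
Proof.
case: n => [|n]; first by case: k.
case: k => [// | k] /=.
elim/(downward_ind n): k => [k le_nk | k IHk] le_kn.
  by rewrite (_ : k = n) ?b_diag ?ltr01 //; lia.
have [-> | ne_kn] := eqVneq k n; first by rewrite b_diag ltr01.
have A_gt0 : 0 < (k.*2.+2 * k.*2.+1)%:R :> R by rewrite ltr0n.
rewrite -(pmulr_rgt0 _ A_gt0) b_rec ltr_wpDl ?mulr_ge0 ?triangle_ge0 //.
by rewrite mulr_gt0 ?ltr0n ?IHk //; lia.
Qed.

Definition row_halving n := forall k, (0 < k)%N -> 2 * b n k.+1 <= b n k.

Lemma triangle_next_row_tail_le n : row_halving n -> forall k, (0 < k)%N ->
  (4 * k.+1 * k.+2)%:R * b n.+1 k.+2 <= (n.*2.+2 * n.*2.+1)%:R * b n k.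
Proof.
move=> halving; elim/(downward_ind n) => [k le_nk _ | k IHk k_gt0].
  by rewrite b_eq0 ?mulr0 ?mulr_ge0 ?triangle_ge0 //; lia.
have le_coef : (4 * k.+1 * k.+2)%:R <= (k.+1.*2.+2 * k.+1.*2.+1)%:R :> R.
  by rewrite ler_nat; lia.
apply: le_trans (ler_wpM2r (triangle_ge0 _ _) le_coef) _; rewrite b_rec.
have := IHk isT; have := ler_wpM2l (ler0n R (n.*2.+2 * n.*2.+1)) (halving k k_gt0).
lra.
Qed.

(* For k >= 2 the tail bound at k-1 combines with (2k)(2k-1) < 4k(k+1);
   for k = 1 the recurrence 2 b(n+1,1) = (2n+2)(2n+1) b(n,0) + 8 b(n+1,2)
   suffices on its own. *)
Lemma triangle_next_row_halving_lt n : row_halving n -> forall k, (0 < k)%N ->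
  0 < b n.+1 k.+1 -> 2 * b n.+1 k.+1 < b n.+1 k.
Proof.
move=> halving [// | k] _ x_gt0.
have A_gt0 : 0 < (k.*2.+2 * k.*2.+1)%:R :> R by rewrite ltr0n.
rewrite -(ltr_pM2l A_gt0) b_rec.
have Cy_ge0 := mulr_ge0 (ler0n R (n.*2.+2 * n.*2.+1)) (triangle_ge0 n k).
case: k => [|k] in A_gt0 x_gt0 Cy_ge0 *; first by rewrite double0; lra.
have := triangle_next_row_tail_le n halving _ (ltn0Sn k).
have : (k.+1.*2.+2 * k.+1.*2.+1)%:R * b n.+1 k.+3 < (4 * k.+2 * k.+3)%:R * b n.+1 k.+3.
  by rewrite ltr_pM2r // ltr_nat; lia.
lra.
Qed.

Lemma triangle_halving n : row_halving n.
Proof.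
elim: n => [k k_gt0 | n IH k k_gt0]; first by rewrite !b_eq0 ?mulr0.
have := triangle_ge0 n.+1 k.+1; rewrite le_eqVlt => /orP[/eqP <- | x_gt0].
  by rewrite mulr0 triangle_ge0.
exact/ltW/triangle_next_row_halving_lt.
Qed.

Lemma triangle_halving_lt n k : (0 < k < n)%N -> 2 * b n k.+1 < b n k.
Proof.
case: n => [| n] /andP[k_gt0 lt_kn] //.
apply: (triangle_next_row_halving_lt n (triangle_halving n) k k_gt0).
by apply: triangle_gt0; lia.
Qed.

Lemma triangle_tail_sum_lt n k : (0 < k < n)%N -> \sum_(k.+1 <= l < n.+1) b n l < b n k.
Proof.
move=> lt0kn; apply: le_lt_trans _ (triangle_halving_lt n k lt0kn).
have := @sum_halving_le _ (b n) k.+1 n.+1.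
rewrite b_eq0 // mulr0 addr0; apply; last by lia.
by move=> l le_kl; apply: triangle_halving; lia.
Qed.

End PositiveTriangle.

Definition salie_scaled (s : nat -> nat -> rat) n k : rat := s n k * 4 ^+ n / 4 ^+ k.

(* (-1)^(n+k) is the sign of s(n,k), so this is 4^(n-k) |s(n,k)|. *)
Definition salie_signed (s : nat -> nat -> rat) n k : rat :=
  (-1) ^+ (n + k) * salie_scaled s n k.

Section Salie.
Context {s : nat -> nat -> rat}.
Hypothesis hs : salie_gf s.
Local Notation a := (salie_scaled s).
Local Notation T := even_binomial_transform.

Lemma salie_scaled_transform k n : T (a^~ k) n = 'C(n, k)%:R.
Proof.
have pow4_neq0 j : (4 : rat) ^+ j != 0 by rewrite expf_neq0.
apply: (mulIf (x := 4 ^+ k / 4 ^+ n)); first by rewrite mulf_neq0 ?invr_eq0.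
rewrite [RHS]mulrA -hs /T mulr_suml; apply: eq_bigr => m _.
rewrite /salie_scaled exprB ?unitfE //; last by rewrite -ltnS.
by field; rewrite !pow4_neq0.
Qed.

Lemma salie_scaled_eq0 n k : (n < k)%N -> a n k = 0.
Proof.
apply: (@even_binomial_transform_inj _ (a^~ k) (fun=> 0) k) => m lt_mk.
by rewrite salie_scaled_transform bin_small // /T big1 // => i _; rewrite mulr0.
Qed.

Lemma salie_scaled_diag n : a n n = 1.
Proof.
have := salie_scaled_transform n n; rewrite even_binomial_transform_recr binn.
by rewrite big1 ?add0r // => m _; rewrite salie_scaled_eq0 ?mulr0.
Qed.

Lemma salie_scaled_col0 n : a n 0 = (n == 0)%:R.
Proof.
apply: (@even_binomial_transform_inj _ (a^~ 0) (fun m => (m == 0)%:R) n.+1) => // m _.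
rewrite salie_scaled_transform bin0 /T big_ord_recl bin0 mul1r big1 ?addr0 //.
by move=> i _; rewrite mulr0.
Qed.

Lemma salie_scaled_rec n k :
  (k.*2.+2 * k.*2.+1)%:R * a n.+1 k.+1 + (4 * k.+1 * k.+2)%:R * a n.+1 k.+2
  = (n.*2.+2 * n.*2.+1)%:R * a n k.
Proof.
have := @even_binomial_transform_inj _
  (fun m => (k.*2.+2 * k.*2.+1)%:R * a m k.+1 + (4 * k.+1 * k.+2)%:R * a m k.+2)
  (fun m => (m.*2 * (m.*2).-1)%:R * a m.-1 k) n.+2.
rewrite -doubleS; apply=> // N _.
rewrite even_binomial_transformD (even_binomial_transform_shift (a^~ k)).
by rewrite !salie_scaled_transform -!natrM -natrD bin_double_rec.
Qed.

Lemma salie_signed_eq0 n k : (n < k)%N -> salie_signed s n k = 0.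
Proof. by move=> lt_nk; rewrite /salie_signed salie_scaled_eq0 ?mulr0. Qed.

Lemma salie_signed_diag n : salie_signed s n n = 1.
Proof.
by rewrite /salie_signed salie_scaled_diag mulr1 addnn -mul2n exprM sqrrN !expr1n.
Qed.

Lemma salie_signed_col0_ge0 n : 0 <= salie_signed s n 0.
Proof.
by rewrite /salie_signed salie_scaled_col0 addn0; case: n => [|n]; rewrite ?mulr0 ?mulr1.
Qed.

Lemma salie_signed_rec n k :
  (k.*2.+2 * k.*2.+1)%:R * salie_signed s n.+1 k.+1
  = (n.*2.+2 * n.*2.+1)%:R * salie_signed s n k
    + (4 * k.+1 * k.+2)%:R * salie_signed s n.+1 k.+2.
Proof.
rewrite /salie_signed !addSn !addnS !exprS.
set A := (k.*2.+2 * k.*2.+1)%:R; set B := (4 * k.+1 * k.+2)%:R.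
have rec : A * a n.+1 k.+1 = (n.*2.+2 * n.*2.+1)%:R * a n k - B * a n.+1 k.+2.
  by rewrite -salie_scaled_rec addrK.
by rewrite !mulN1r opprK mulrCA rec; ring.
Qed.

Lemma salie_epsE n k : salie_eps s n k = salie_signed s n k / 4 ^+ n.
Proof.
have pow4_neq0 j : (4 : rat) ^+ j != 0 by rewrite expf_neq0.
have := triangle_ge0 salie_signed_eq0 salie_signed_col0_ge0 salie_signed_rec n k.
move=> /ger0_norm <-; rewrite /salie_eps /salie_signed normrMsign /salie_scaled.
rewrite !normrM normfV !normrX normr_nat.
by field; rewrite !pow4_neq0.
Qed.

End Salie.

Theorem mainTheorem8 (s : nat -> nat -> rat) (hs : salie_gf s) :
  forall n k : nat, (1 < n)%N -> (1 <= k <= n - 1)%N ->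
    2 * salie_eps s n k.+1 < salie_eps s n k /\
    \sum_(k.+1 <= l < n.+1) salie_eps s n l < salie_eps s n k.
Proof.
move=> n k n_gt1 /andP[k_gt0 k_le]; have lt0kn : (0 < k < n)%N by lia.
move: (salie_signed_eq0 hs) (salie_signed_diag hs) (salie_signed_col0_ge0 hs)
  (salie_signed_rec hs) => eq0 diag col0 rec.
have pow4_inv_gt0 : 0 < (4 ^+ n : rat)^-1 by rewrite invr_gt0 exprn_gt0.
under eq_bigr do rewrite salie_epsE //.
rewrite !salie_epsE // -mulr_suml mulrA !ltr_pM2r //.
split; [exact: triangle_halving_lt eq0 diag col0 rec n k lt0kn |].
exact: triangle_tail_sum_lt eq0 diag col0 rec n k lt0kn.
Qed.
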